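(* If $R$ is a closed $\forall^+$ type, then for every environment $\gamma$, $\llbracket R\rrbracket_\gamma$ is a partial equivalence relation (symmetric and transitive).
   Context: Terms are those of the pure untyped $\lambda$-calculus, up to $\alpha$-equivalence; $=_{\beta\eta}$ is $\beta\eta$-convertibility. Relational types: $R ::= X \mid R\to R' \mid \forall X.R \mid R^{\cup} \mid R\cdot R' \mid t$ (last form: promotion of a term). A relation on terms is $\beta\eta$-closed if closed under replacing either related term by a $\beta\eta$-equal one; $\mathcal{R}$ is the set of such relations; environments $\gamma$ map finitely many type variables to $\mathcal{R}$. Interpretation: $\llbracket X\rrbracket_\gamma=\gamma(X)$; $t\,\llbracket R\to R'\rrbracket_\gamma\,t'$ iff for all $a,a'$ with $a\,\llbracket R\rrbracket_\gamma\,a'$, $t\,a\,\llbracket R'\rrbracket_\gamma\,t'\,a'$; $\llbracket \forall X.R\rrbracket_\gamma=\bigcap_{r\in\mathcal{R}}\llbracket R\rrbracket_{\gamma[X\mapsto r]}$; $t\,\llbracket R^\cup\rrbracket_\gamma\,t'$ iff $t'\,\llbracket R\rrbracket_\gamma\,t$; $t\,\llbracket R\cdot R'\rrbracket_\gamma\,t'$ iff $\exists t''$, $t\,\llbracket R\rrbracket_\gamma\,t''$ and $t''\,\llbracket R'\rrbracket_\gamma\,t'$; $\llbracket \hat t\rrbracket_\gamma=\{(t,t')\mid \hat t\,t=_{\beta\eta}t'\}$. Polarities $p\in\{+,-\}$, $\bar p$ the other; $\forall^p$: type variables are $\forall^p$; if $R$ is $\forall^{\bar p}$ and $R'$ is $\forall^p$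 then $R\to R'$ is $\forall^p$; if $R$ is $\forall^+$ then $\forall X.R$ is $\forall^+$; if $R$ is $\forall^p$ then so is $R^\cup$; a promotion of $t$ with $t=_{\beta\eta}\lambda x.x$ is $\forall^p$. *)

From Stdlib Require Import Arith Relations.

Inductive term : Type :=
| Var : nat -> term
| App : term -> term -> term
| Lam : term -> term.

Fixpoint lift (c : nat) (t : term) : term :=
  match t with
  | Var n => if n <? c then Var n else Var (S n)
  | App a b => App (lift c a) (lift c b)
  | Lam b => Lam (lift (S c) b)
  end.

Fixpoint subst (k : nat) (u : term) (t : term) : term :=
  match t with
  | Var n => if n <? k then Var n else if n =? k then u else Var (pred n)
  | App a b => App (subst k u a) (subst k u b)
  | Lam b => Lam (subst (S k) (lift 0 u) b)
  end.

Inductive step : term -> term -> Prop :=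
| st_beta : forall b a, step (App (Lam b) a) (subst 0 a b)
| st_eta : forall t, step (Lam (App (lift 0 t) (Var 0))) t
| st_appl : forall a a' b, step a a' -> step (App a b) (App a' b)
| st_appr : forall a b b', step b b' -> step (App a b) (App a b')
| st_lam : forall b b', step b b' -> step (Lam b) (Lam b').

Definition beq : term -> term -> Prop := clos_refl_sym_trans term step.

Definition rel := term -> term -> Prop.

Definition bclosed (r : rel) : Prop :=
  forall t1 t1' t2 t2', beq t1 t1' -> beq t2 t2' -> r t1 t2 -> r t1' t2'.

Inductive rtype : Type :=
| RVar : nat -> rtype
| RArr : rtype -> rtype -> rtype
| RAll : nat -> rtype -> rtype
| RConv : rtype -> rtype
| RComp : rtype -> rtype -> rtype
| RProm : term -> rtype.

Definition env := nat -> rel.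

Definition upd (g : env) (X : nat) (r : rel) : env :=
  fun Y => if Y =? X then r else g Y.

Fixpoint interp (R : rtype) (g : env) : rel :=
  match R with
  | RVar X => g X
  | RArr R1 R2 => fun t t' =>
      forall a a', interp R1 g a a' -> interp R2 g (App t a) (App t' a')
  | RAll X R1 => fun t t' =>
      forall r, bclosed r -> interp R1 (upd g X r) t t'
  | RConv R1 => fun t t' => interp R1 g t' t
  | RComp R1 R2 => fun t t' =>
      exists t'', interp R1 g t t'' /\ interp R2 g t'' t'
  | RProm u => fun t t' => beq (App u t) t'
  end.

Fixpoint free_in (X : nat) (R : rtype) : Prop :=
  match R with
  | RVar Y => X = Y
  | RArr R1 R2 => free_in X R1 \/ free_in X R2
  | RAll Y R1 => X <> Y /\ free_in X R1
  | RConv R1 => free_in X R1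
  | RComp R1 R2 => free_in X R1 \/ free_in X R2
  | RProm _ => False
  end.

Definition closed_rtype (R : rtype) : Prop := forall X, ~ free_in X R.

(* polarity: true = +, false = - ; forallp p R means R is forall^p *)
Inductive forallp : bool -> rtype -> Prop :=
| fp_var : forall p X, forallp p (RVar X)
| fp_arr : forall p R1 R2,
    forallp (negb p) R1 -> forallp p R2 -> forallp p (RArr R1 R2)
| fp_all : forall X R1, forallp true R1 -> forallp true (RAll X R1)
| fp_conv : forall p R1, forallp p R1 -> forallp p (RConv R1)
| fp_prom : forall p t, beq t (Lam (Var 0)) -> forallp p (RProm t).

Definition PER (r : rel) : Prop :=
  (forall t t', r t t' -> r t' t) /\
  (forall t t' t'', r t t' -> r t' t'' -> r t t'').

(* Identity extension: interpret every type variable as βη-convertibility.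
   Under that environment a ∀⁺ type denotes a subrelation of βη and a ∀⁻ type
   a superrelation of it, by simultaneous induction; the arrow case of the
   ∀⁺ half is where η enters, through extensionality of βη.  A closed type
   denotes the same relation in every environment, so a closed ∀⁺ type
   denotes a βη-closed subrelation of βη.  Such a relation r is a PER: if
   t r t' then t =βη t', and closure under βη turns t r t' into t' r t, and
   t' r t'' into t r t''. *)

From Stdlib Require Import Arith Relations Lia Setoid Morphisms.

Ltac index_cases :=
  repeat (cbn [lift subst]; match goal with
  | |- context [?a <? ?b] => destruct (Nat.ltb_spec a b)
  | |- context [?a =? ?b] => destruct (Nat.eqb_spec a b)
  end); cbn [lift subst]; try (f_equal; lia); try lia.

Lemma lift_lift t i j : i <= j -> lift (S j) (lift i t) = lift i (lift j t).
Proof.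
  revert i j; induction t; intros i j Hij; simpl.
  - index_cases.
  - f_equal; auto.
  - f_equal; auto with arith.
Qed.

Lemma lift_subst_above t k j u : k <= j ->
  lift j (subst k u t) = subst k (lift j u) (lift (S j) t).
Proof.
  revert k j u; induction t; intros k j u Hkj; simpl.
  - index_cases.
  - f_equal; auto.
  - f_equal; rewrite IHt, lift_lift; auto with arith.
Qed.

Lemma lift_subst_below t k j u : j <= k ->
  lift j (subst k u t) = subst (S k) (lift j u) (lift j t).
Proof.
  revert k j u; induction t; intros k j u Hjk; simpl.
  - index_cases.
  - f_equal; auto.
  - f_equal; rewrite IHt, lift_lift; auto with arith.
Qed.

Lemma subst_lift t k u : subst k u (lift k t) = t.
Proof.
  revert k u; induction t; intros k u; simpl.
  - index_cases.
  - f_equal; auto.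
  - f_equal; auto.
Qed.

Lemma subst_subst b j k w a : j <= k ->
  subst k w (subst j a b) = subst j (subst k w a) (subst (S k) (lift j w) b).
Proof.
  revert j k w a; induction b; intros j k w a Hjk; simpl.
  - destruct (Nat.eqb_spec n (S k)) as [->|]; [|index_cases].
    index_cases; symmetry; apply subst_lift.
  - f_equal; auto.
  - f_equal; rewrite IHb, lift_subst_below, lift_lift; auto with arith.
Qed.

Lemma step_lift k u v : step u v -> step (lift k u) (lift k v).
Proof.
  intros H; revert k; induction H; intros k; simpl; try (constructor; auto).
  - rewrite (lift_subst_above b 0 k a) by lia; constructor.
  - rewrite lift_lift by lia; constructor.
Qed.

Lemma step_subst k w u v : step u v -> step (subst k w u) (subst k w v).
Proof.
  intros H; revert k w; induction H; intros k w; simpl; try (constructor; auto).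
  - rewrite (subst_subst b 0 k w a) by lia; constructor.
  - rewrite <- lift_subst_below by lia; constructor.
Qed.

#[local] Instance beq_Equivalence : Equivalence beq.
Proof.
  destruct (clos_rst_is_equiv term step); split; assumption.
Qed.

Lemma beq_step t t' : step t t' -> beq t t'.
Proof. apply rst_step. Qed.

Lemma step_compat_beq (f : term -> term) :
  (forall u v, step u v -> step (f u) (f v)) -> Proper (beq ==> beq) f.
Proof.
  intros Hf u v H; induction H.
  - apply beq_step; auto.
  - reflexivity.
  - symmetry; assumption.
  - etransitivity; eassumption.
Qed.

#[local] Instance App_beq : Proper (beq ==> beq ==> beq) App.
Proof.
  intros a a' Ea b b' Eb; transitivity (App a' b).
  - apply (step_compat_beq (fun x => App x b)); auto using st_appl.
  - apply (step_compat_beq (App a')); auto using st_appr.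
Qed.

#[local] Instance Lam_beq : Proper (beq ==> beq) Lam.
Proof. apply step_compat_beq, st_lam. Qed.

Lemma beq_bclosed : bclosed beq.
Proof. intros t1 t1' t2 t2' E1 E2 E; rewrite <- E1, <- E2; exact E. Qed.

Fixpoint fv_below (k : nat) (t : term) : Prop :=
  match t with
  | Var n => n < k
  | App a b => fv_below k a /\ fv_below k b
  | Lam b => fv_below (S k) b
  end.

Lemma fv_below_mono t k k' : fv_below k t -> k <= k' -> fv_below k' t.
Proof.
  revert k k'; induction t; simpl; intros k k' H Hk.
  - lia.
  - destruct H; split; eauto.
  - apply (IHt (S k)); auto with arith.
Qed.

Lemma fv_below_exists t : exists k, fv_below k t.
Proof.
  induction t as [n | a [ka Ha] b [kb Hb] | b [k Hb]].
  - exists (S n); simpl; lia.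
  - exists (max ka kb); simpl; split; eapply fv_below_mono; eauto; lia.
  - exists k; simpl; eapply fv_below_mono; eauto.
Qed.

Lemma fv_below_lift t k j : fv_below k t -> fv_below (S k) (lift j t).
Proof.
  revert k j; induction t; simpl; intros k j H.
  - destruct (Nat.ltb_spec n j); simpl; lia.
  - destruct H; split; auto.
  - apply IHt; auto.
Qed.

Lemma subst_fv_below t k u : fv_below k t -> subst k u t = t.
Proof.
  revert k u; induction t; simpl; intros k u H.
  - destruct (Nat.ltb_spec n k); [reflexivity | lia].
  - destruct H; f_equal; auto.
  - f_equal; auto.
Qed.

Lemma beq_extensional t t' : (forall a, beq (App t a) (App t' a)) -> beq t t'.
Proof.
  intros H.
  destruct (fv_below_exists t) as [k1 H1], (fv_below_exists t') as [k2 H2].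
  set (n := max k1 k2).
  (* Apply the hypothesis to the fresh variable [n], then rename it to the
     variable bound by an η-expansion. *)
  specialize (H (Var n)).
  apply (step_compat_beq _ (step_lift 0)) in H.
  apply (step_compat_beq _ (step_subst (S n) (Var 0))) in H.
  simpl in H; rewrite Nat.ltb_irrefl, Nat.eqb_refl in H.
  rewrite !subst_fv_below in H
    by (apply fv_below_lift; eapply fv_below_mono; eauto; lia).
  rewrite <- (beq_step _ _ (st_eta t)), <- (beq_step _ _ (st_eta t')), H.
  reflexivity.
Qed.

Lemma upd_bclosed g X r :
  (forall Y, bclosed (g Y)) -> bclosed r -> forall Y, bclosed (upd g X r Y).
Proof. intros Hg Hr Y; unfold upd; destruct (Y =? X); auto. Qed.

Lemma interp_bclosed R g : (forall X, bclosed (g X)) -> bclosed (interp R g).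
Proof.
  revert g; induction R; intros g Hg t1 t1' t2 t2' E1 E2; simpl.
  - apply Hg; auto.
  - intros H a a' Ha; apply (IHR2 g Hg (App t1 a) _ (App t2 a'));
      [rewrite E1 | rewrite E2 | apply H, Ha]; reflexivity.
  - intros H r Hr; eapply IHR; [apply upd_bclosed | | | apply H]; eauto.
  - apply IHR; auto.
  - intros [t'' [Ha Hb]]; exists t''; split.
    + eapply IHR1; eauto; reflexivity.
    + eapply IHR2; eauto; reflexivity.
  - intros H; rewrite <- E1, <- E2; exact H.
Qed.

Lemma interp_agree R g g' :
  (forall X, free_in X R -> forall t t', g X t t' <-> g' X t t') ->
  forall t t', interp R g t t' <-> interp R g' t t'.
Proof.
  revert g g'; induction R; intros g g' Hg; simpl.
  - apply Hg; reflexivity.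
  - setoid_rewrite (IHR1 g g'); [setoid_rewrite (IHR2 g g') |]; [reflexivity | |];
      intros X HX; apply Hg; simpl; auto.
  - assert (Hupd : forall r X, free_in X R ->
                   forall t t', upd g n r X t t' <-> upd g' n r X t t').
    { intros r X HX t t'; unfold upd; destruct (Nat.eqb_spec X n); [tauto |].
      apply Hg; simpl; auto. }
    intros t t'; split; intros H r Hr; apply (IHR _ _ (Hupd r)), H, Hr.
  - intros t t'; apply IHR; auto.
  - setoid_rewrite (IHR1 g g'); [setoid_rewrite (IHR2 g g') |]; [reflexivity | |];
      intros X HX; apply Hg; simpl; auto.
  - reflexivity.
Qed.

Lemma closed_interp_env_irrelevant R g g' t t' :
  closed_rtype R -> interp R g t t' <-> interp R g' t t'.
Proof.
  intros Hc; apply interp_agree; intros X HX; destruct (Hc X HX).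
Qed.

Lemma interp_upd_same R g X t t' :
  interp R (upd g X (g X)) t t' <-> interp R g t t'.
Proof.
  apply interp_agree; intros Y _ a b; unfold upd.
  destruct (Nat.eqb_spec Y X) as [->|]; reflexivity.
Qed.

Lemma interp_prom_id u g t t' :
  beq u (Lam (Var 0)) -> interp (RProm u) g t t' <-> beq t t'.
Proof.
  intros Hu; simpl; rewrite Hu, (beq_step _ _ (st_beta (Var 0) t)); reflexivity.
Qed.

Definition beq_env : env := fun _ => beq.

Lemma forallp_identity_extension p R : forallp p R ->
  if p then inclusion term (interp R beq_env) beq
  else inclusion term beq (interp R beq_env).
Proof.
  induction 1 as [p X | p R1 R2 _ IH1 _ IH2 | X R1 _ IH | p R1 _ IH | p u Hu].
  - destruct p; intros t t'; auto.
  - destruct p; simpl in IH1, IH2 |- *.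
    + intros t t' Ht; apply beq_extensional; intros a.
      apply IH2, Ht, IH1; reflexivity.
    + intros t t' E a a' Ha; apply IH2; rewrite E, (IH1 _ _ Ha); reflexivity.
  - intros t t' Ht; apply IH, (interp_upd_same R1 beq_env X), Ht, beq_bclosed.
  - destruct p; simpl; intros t t' Ht.
    + symmetry; apply IH, Ht.
    + apply IH; symmetry; exact Ht.
  - destruct p; intros t t'; apply interp_prom_id; assumption.
Qed.

Lemma bclosed_sub_beq_PER r : bclosed r -> inclusion term r beq -> PER r.
Proof.
  intros Hr Hsub; split.
  - intros t t' H; apply (Hr t t' t' t); [apply Hsub | symmetry; apply Hsub | ]; auto.
  - intros t t' t'' H1 H2; apply (Hr t t t' t''); [reflexivity | apply Hsub | ]; auto.
Qed.

Theorem mainTheorem12 (R : rtype) (g : env) :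
  closed_rtype R -> forallp true R ->
  (forall X, bclosed (g X)) ->
  PER (interp R g).
Proof.
  intros Hc Hp Hg.
  apply bclosed_sub_beq_PER; [apply interp_bclosed; exact Hg |].
  intros t t' H.
  apply (forallp_identity_extension true R Hp).
  apply (closed_interp_env_irrelevant R g beq_env t t' Hc), H.
Qed.
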